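(* Let $x,y>0$, $z\ge 0$, $p>0$ (the approximations are intended for the regime $z,p\ll x,y$). Let $a=(x+y)/2$, $g=\sqrt{xy}$, $b=\sqrt{3p(p+2z)}/2$, $d=(z+2p)/3$. Then $$R_J(x,y,z,p)=\frac3g R_C(z,p)-\frac{3\theta}{g-p}\left[R_C(z,g)-\frac pg R_C(z,p)\right],$$ where $1\le\theta\le a/g$ with equalities iff $x=y$; in the complete case $z=0$ this reduces to $$R_J(x,y,0,p)=\frac{3\pi}{2\sqrt{xyp}}\left(1-\frac{\theta\sqrt p}{\sqrt g+\sqrt p}\right)$$ with $\theta$ as before. Moreover, $$R_J(x,y,z,p)=\frac3g R_C(z,p)-\frac{6}{xy}R_G(x,y,0)+\frac{3\pi\theta'}{2xy},\quad \frac{\sqrt b}{1+\sqrt{b/g}}<\theta'<\frac{3a}{2g}\,\frac{\sqrt d}{1+\sqrt{d/g}}.$$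
   Context: For $x,y,z\ge 0$ with at most one zero and $p>0$: $R_J(x,y,z,p)=\frac32\int_0^\infty[(t+x)(t+y)(t+z)]^{-1/2}(t+p)^{-1}\,dt$; $R_G(x,y,z)=\frac14\int_0^\infty[(t+x)(t+y)(t+z)]^{-1/2}\left(\frac{x}{t+x}+\frac{y}{t+y}+\frac{z}{t+z}\right)t\,dt$. For $x\ge0$, $y>0$: $R_C(x,y)=\frac12\int_0^\infty(t+x)^{-1/2}(t+y)^{-1}\,dt$. *)

From Stdlib Require Import Reals.
From Coquelicot Require Import Coquelicot.
Open Scope R_scope.

(* Improper integral over (0, +oo): lower end is approached from the right
   (the integrands may be singular at t = 0 when a variable vanishes),
   upper end is +oo. *)
Definition int0inf (f : R -> R) : R :=
  RInt_gen f (at_right 0) (Rbar_locally p_infty).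

Definition RC (x y : R) : R :=
  / 2 * int0inf (fun t => / sqrt (t + x) * / (t + y)).

Definition RJ (x y z p : R) : R :=
  3 / 2 * int0inf (fun t => / sqrt ((t + x) * (t + y) * (t + z)) * / (t + p)).

Definition RG (x y z : R) : R :=
  / 4 * int0inf (fun t => / sqrt ((t + x) * (t + y) * (t + z)) *
                          (x / (t + x) + y / (t + y) + z / (t + z)) * t).

From Stdlib Require Import Reals Lra Psatz Classical.
From Coquelicot Require Import Coquelicot.
Open Scope R_scope.

(* Write g = sqrt (x y), a = (x + y) / 2, w for the integrand of R_C(z, p) and
   h_{x,y}(t) = 1 / sqrt (x y) - 1 / sqrt ((t + x) (t + y)) (this is [defect x y t]), so that
   R_J(x, y, z, p) = (3/2) int w (1/g - h_{x,y}).  Squaring shows h_{g,g} <= h_{x,y} <= (a/g) h_{g,g},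
   strictly unless x = y, and h_{g,g}(t) = t / (g (t + g)).  Hence for every positive weight phi,
   int phi h_{x,y} = theta int phi h_{g,g} with 1 <= theta <= a/g.
   For phi = w, partial fractions turn int w h_{g,g} into R_C(z, p) and R_C(z, g), or into
   arctangents when z = 0.  For the second formula, integration by parts gives
   R_G(x, y, 0) = (x y / 4) int t^(-3/2) h_{x,y}; one takes phi = t^(-3/2) - w and bounds w between
   (2 t - d) / (2 t^(3/2) (t + d)) and t^(-1/2) / (t + b), which bounds int phi h_{g,g} by
   elementary integrals. *)

(** * Improper integrals over (0, +oo) *)

Notation is_RInt_0_oo f l := (@is_RInt_gen R_NormedModule f (at_right 0) (Rbar_locally p_infty) l).
Notation ex_RInt_0_oo f := (@ex_RInt_gen R_NormedModule f (at_right 0) (Rbar_locally p_infty)).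

Definition continuous_on_pos (f : R -> R) := forall t, 0 < t -> continuous f t.

Lemma continuous_on_pos_of_ex_derive (f : R -> R) :
  (forall t, 0 < t -> ex_derive f t) -> continuous_on_pos f.
Proof. intros Hf t Ht. apply (ex_derive_continuous (K := R_AbsRing) (V := R_NormedModule)), Hf, Ht. Qed.

Lemma continuous_on_pos_minus (f g : R -> R) :
  continuous_on_pos f -> continuous_on_pos g -> continuous_on_pos (fun t => f t - g t).
Proof. intros Hf Hg t Ht. apply (continuous_minus f g); auto. Qed.

Lemma continuous_on_pos_mult (f g : R -> R) :
  continuous_on_pos f -> continuous_on_pos g -> continuous_on_pos (fun t => f t * g t).
Proof. intros Hf Hg t Ht. apply (continuous_mult f g); auto. Qed.

Lemma continuous_on_pos_scal (k : R) (f : R -> R) :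
  continuous_on_pos f -> continuous_on_pos (fun t => k * f t).
Proof. intros Hf t Ht. apply (continuous_mult (fun _ => k) f); auto. apply continuous_const. Qed.

Lemma continuous_on_pos_div_shift (f : R -> R) (c : R) :
  0 <= c -> continuous_on_pos f -> continuous_on_pos (fun t => f t / (t + c)).
Proof.
  intros Hc Hf. apply continuous_on_pos_mult; [exact Hf|].
  apply continuous_on_pos_of_ex_derive; intros t Ht; auto_derive; lra.
Qed.

Lemma at_right_0_lt (c : R) : 0 < c -> at_right 0 (fun u => 0 < u < c).
Proof.
  intros Hc. exists (mkposreal c Hc); intros u Hu Hu0.
  change (Rabs (u - 0) < c) in Hu. apply Rabs_def2 in Hu. lra.
Qed.

Lemma eventually_0_lt_segment :
  filter_prod (at_right 0) (Rbar_locally p_infty) (fun ab => 0 < fst ab < snd ab).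
Proof.
  apply Filter_prod with (fun u => 0 < u < 1) (fun v => 1 < v).
  - exact (at_right_0_lt 1 Rlt_0_1).
  - exists 1; auto.
  - simpl; intros u v Hu Hv; lra.
Qed.

Lemma ex_RInt_continuous_on_pos (f : R -> R) (u v : R) :
  continuous_on_pos f -> 0 < u <= v -> ex_RInt f u v.
Proof.
  intros Hf Huv. apply (ex_RInt_continuous (V := R_CompleteNormedModule)).
  intros t Ht. apply Hf. rewrite Rmin_left in Ht; lra.
Qed.

Lemma is_RInt_0_oo_ext (f g : R -> R) (l : R) :
  (forall t, 0 < t -> f t = g t) -> is_RInt_0_oo f l -> is_RInt_0_oo g l.
Proof.
  intros Efg. apply is_RInt_gen_ext.
  eapply filter_imp; [|exact eventually_0_lt_segment].
  intros [u v] Huv t Ht; simpl in *.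
  rewrite Rmin_left, Rmax_right in Ht by lra. apply Efg; lra.
Qed.

Lemma is_RInt_0_oo_plus (f g : R -> R) (lf lg : R) :
  is_RInt_0_oo f lf -> is_RInt_0_oo g lg -> is_RInt_0_oo (fun t => f t + g t) (lf + lg).
Proof. exact (is_RInt_gen_plus f g lf lg). Qed.

Lemma is_RInt_0_oo_minus (f g : R -> R) (lf lg : R) :
  is_RInt_0_oo f lf -> is_RInt_0_oo g lg -> is_RInt_0_oo (fun t => f t - g t) (lf - lg).
Proof. exact (is_RInt_gen_minus f g lf lg). Qed.

Lemma is_RInt_0_oo_scal (k : R) (f : R -> R) (l : R) :
  is_RInt_0_oo f l -> is_RInt_0_oo (fun t => k * f t) (k * l).
Proof. exact (is_RInt_gen_scal f k l). Qed.

Lemma int0inf_unique (f : R -> R) (l : R) : is_RInt_0_oo f l -> int0inf f = l.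
Proof. apply (is_RInt_gen_unique (V := R_CompleteNormedModule)). Qed.

Lemma is_RInt_0_oo_int0inf (f : R -> R) : ex_RInt_0_oo f -> is_RInt_0_oo f (int0inf f).
Proof. apply (RInt_gen_correct (V := R_CompleteNormedModule)). Qed.

Lemma is_RInt_0_oo_unique (f : R -> R) (l1 l2 : R) :
  is_RInt_0_oo f l1 -> is_RInt_0_oo f l2 -> l1 = l2.
Proof. intros H1 H2. rewrite <- (int0inf_unique f l1 H1). exact (int0inf_unique f l2 H2). Qed.

Lemma is_RInt_0_oo_ge_0 (f : R -> R) (l : R) :
  (forall t, 0 < t -> 0 <= f t) -> is_RInt_0_oo f l -> 0 <= l.
Proof.
  intros Hf Hl.
  enough (Rabs l <= l) by (pose proof (Rle_abs l); pose proof (Rabs_pos l); lra).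
  apply (RInt_gen_norm (Fa := at_right 0) (Fb := Rbar_locally p_infty) f f l l); auto.
  - eapply filter_imp; [|exact eventually_0_lt_segment]. intros; lra.
  - eapply filter_imp; [|exact eventually_0_lt_segment].
    intros [u v] Huv t Ht; simpl in *. rewrite Rabs_pos_eq; [lra|apply Hf; lra].
Qed.

Lemma is_RInt_0_oo_le (f g : R -> R) (lf lg : R) :
  (forall t, 0 < t -> f t <= g t) -> is_RInt_0_oo f lf -> is_RInt_0_oo g lg -> lf <= lg.
Proof.
  intros Hfg Hf Hg.
  enough (0 <= lg - lf) by lra.
  apply (is_RInt_0_oo_ge_0 (fun t => g t - f t)).
  - intros t Ht; specialize (Hfg t Ht); lra.
  - exact (is_RInt_0_oo_minus _ _ _ _ Hg Hf).
Qed.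

Lemma RInt_le_RInt_wider (f : R -> R) (a b u v : R) :
  continuous_on_pos f -> (forall t, 0 < t -> 0 <= f t) ->
  0 < a <= u -> u <= v <= b -> RInt f u v <= RInt f a b.
Proof.
  intros Cf Hf Hau Hvb.
  assert (Ef : forall c d, a <= c <= d -> ex_RInt f c d)
    by (intros; apply ex_RInt_continuous_on_pos; auto; lra).
  rewrite <- (RInt_Chasles f a u b), <- (RInt_Chasles f u v b) by (apply Ef; lra).
  assert (0 <= RInt f a u) by (apply RInt_ge_0; [lra|apply Ef; lra|intros t Ht; apply Hf; lra]).
  assert (0 <= RInt f v b) by (apply RInt_ge_0; [lra|apply Ef; lra|intros t Ht; apply Hf; lra]).
  simpl; unfold plus; simpl; lra.
Qed.

Lemma RInt_le_is_RInt_0_oo (f g : R -> R) (l u v : R) :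
  continuous_on_pos f -> (forall t, 0 < t -> 0 <= f t <= g t) ->
  is_RInt_0_oo g l -> 0 < u <= v -> RInt f u v <= l.
Proof.
  intros Cf Hfg Hg Huv. apply le_epsilon; intros eps Heps.
  assert (Hnear : filter_prod (at_right 0) (Rbar_locally p_infty)
    (fun ab => (0 < fst ab < u /\ v < snd ab) /\
       exists y, is_RInt g (fst ab) (snd ab) y /\ ball l eps y)).
  { apply filter_and.
    - apply Filter_prod with (fun a => 0 < a < u) (fun b => v < b).
      + apply at_right_0_lt; lra.
      + exists v; auto.
      + simpl; intros; lra.
    - exact (proj1 (filterlimi_locally _ l) Hg (mkposreal eps Heps)). }
  destruct (Hierarchy.filter_ex _ Hnear) as ([a b] & [Ha Hb] & y & Hy & Hyl).
  simpl in *. change (Rabs (y - l) < eps) in Hyl. apply Rabs_def2 in Hyl.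
  assert (RInt f u v <= RInt f a b)
    by (apply RInt_le_RInt_wider; auto; try lra; intros t Ht; apply Hfg, Ht).
  assert (RInt f a b <= y).
  { rewrite <- (is_RInt_unique (V := R_CompleteNormedModule) g a b y Hy).
    apply RInt_le; [lra|apply ex_RInt_continuous_on_pos; auto; lra|now exists y|].
    intros t Ht; apply Hfg; lra. }
  lra.
Qed.

Lemma is_RInt_0_oo_gt_0 (f : R -> R) (l : R) :
  continuous_on_pos f -> (forall t, 0 < t -> 0 < f t) -> is_RInt_0_oo f l -> 0 < l.
Proof.
  intros Cf Hf Hl.
  assert (0 < RInt f 1 2) by (apply RInt_gt_0; [lra|intros t Ht; apply Hf|intros t Ht; apply Cf]; lra).
  enough (RInt f 1 2 <= l) by lra.
  apply (RInt_le_is_RInt_0_oo f f); auto; [|lra].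
  intros t Ht; specialize (Hf t Ht); lra.
Qed.

Lemma is_RInt_0_oo_lt (f g : R -> R) (lf lg : R) :
  continuous_on_pos (fun t => g t - f t) -> (forall t, 0 < t -> f t < g t) ->
  is_RInt_0_oo f lf -> is_RInt_0_oo g lg -> lf < lg.
Proof.
  intros Cgf Hfg Hf Hg.
  enough (0 < lg - lf) by lra.
  apply (is_RInt_0_oo_gt_0 _ _ Cgf); [|exact (is_RInt_0_oo_minus _ _ _ _ Hg Hf)].
  intros t Ht; specialize (Hfg t Ht); lra.
Qed.

Lemma ex_RInt_0_oo_dominated (f g : R -> R) (l : R) :
  continuous_on_pos f -> (forall t, 0 < t -> 0 <= f t <= g t) ->
  is_RInt_0_oo g l -> ex_RInt_0_oo f.
Proof.
  intros Cf Hfg Hg.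
  assert (Hf : forall t, 0 < t -> 0 <= f t) by (intros t Ht; apply Hfg, Ht).
  set (E := fun r => exists u v, 0 < u <= v /\ r = RInt f u v).
  assert (HE : bound E).
  { exists l; intros r (u & v & Huv & ->). eapply RInt_le_is_RInt_0_oo; eauto. }
  destruct (completeness E HE) as [S [HS HSlub]].
  { exists (RInt f 1 1), 1, 1; split; [lra|reflexivity]. }
  exists S. apply (filterlimi_lim_ext_loc (fun ab => RInt f (fst ab) (snd ab))).
  - eapply filter_imp; [|exact eventually_0_lt_segment].
    intros [a b] Hab; simpl in Hab.
    apply (RInt_correct (V := R_CompleteNormedModule)), ex_RInt_continuous_on_pos; auto; simpl; lra.
  - apply filterlim_locally; intros eps.
    assert (exists u v, 0 < u <= v /\ S - eps < RInt f u v) as (u & v & Huv & Hlt).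
    { apply NNPP; intros Hno.
      enough (S <= S - eps) by (pose proof (cond_pos eps); lra).
      apply HSlub; intros r (u & v & Huv & ->).
      apply Rnot_lt_le; intros Hlt; apply Hno; eauto. }
    apply Filter_prod with (fun a => 0 < a < u) (fun b => v < b).
    + apply at_right_0_lt; lra.
    + exists v; auto.
    + intros a b Ha Hb; simpl.
      assert (RInt f u v <= RInt f a b) by (apply RInt_le_RInt_wider; auto; lra).
      assert (RInt f a b <= S) by (apply HS; exists a, b; split; [lra|reflexivity]).
      change (Rabs (RInt f a b - S) < eps). apply Rabs_def1; lra.
Qed.

Lemma is_RInt_0_oo_derive (F f : R -> R) (L0 L1 : R) :
  (forall t, 0 < t -> is_derive F t (f t)) -> continuous_on_pos f ->
  filterlim F (at_right 0) (locally L0) -> filterlim F (Rbar_locally p_infty) (locally L1) ->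
  is_RInt_0_oo f (L1 - L0).
Proof.
  intros DF Cf H0 H1.
  assert (EF : forall t, 0 < t -> Derive F t = f t) by (intros; apply is_derive_unique, DF; lra).
  apply (is_RInt_0_oo_ext (Derive F)); [exact EF|].
  apply is_RInt_gen_Derive; auto;
    (eapply filter_imp; [|exact eventually_0_lt_segment]);
    intros [a b] Hab t Ht; simpl in Hab, Ht; rewrite Rmin_left, Rmax_right in Ht by lra.
  - exists (f t); apply DF; lra.
  - apply (continuous_ext_loc _ f); [|apply Cf; lra].
    exists (mkposreal t ltac:(lra)); intros s Hs.
    change (Rabs (s - t) < t) in Hs. apply Rabs_def2 in Hs.
    symmetry; apply EF; lra.
Qed.

Lemma filterlim_of_abs_le {T : Type} (F : (T -> Prop) -> Prop) {FF : Filter F}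
  (f phi : T -> R) (L : R) :
  F (fun t => Rabs (f t - L) <= phi t) -> filterlim phi F (locally 0) ->
  filterlim f F (locally L).
Proof.
  intros Hb Hphi. apply filterlim_locally; intros eps.
  generalize (filter_and _ _ Hb (proj1 (filterlim_locally phi 0) Hphi eps)).
  apply filter_imp; intros t [Ht Hphit].
  change (Rabs (phi t - 0) < eps) in Hphit. change (Rabs (f t - L) < eps).
  rewrite Rminus_0_r in Hphit. pose proof (Rle_abs (phi t)). lra.
Qed.

Lemma filterlim_at_right_0_of_sqrt_bound (F : R -> R) (L C : R) :
  (forall t, 0 < t < 1 -> Rabs (F t - L) <= C * sqrt t) ->
  filterlim F (at_right 0) (locally L).
Proof.
  intros HF. apply (filterlim_of_abs_le _ F (fun t => C * sqrt t)).
  - eapply filter_imp; [exact HF|apply at_right_0_lt, Rlt_0_1].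
  - apply (filterlim_filter_le_1 (F := locally 0)); [apply filter_le_within|].
    pose proof (continuous_mult (fun _ => C) sqrt 0 (continuous_const C 0) (continuous_sqrt 0)) as Hc.
    unfold continuous in Hc; simpl in Hc. rewrite sqrt_0 in Hc.
    replace 0 with (C * 0) at 2 by ring. exact Hc.
Qed.

Lemma filterlim_p_infty_of_inv_sqrt_bound (F : R -> R) (L C : R) :
  (forall t, 0 < t -> Rabs (F t - L) <= C / sqrt t) ->
  filterlim F (Rbar_locally p_infty) (locally L).
Proof.
  intros HF. apply (filterlim_of_abs_le _ F (fun t => C / sqrt t)).
  - exists 0; exact HF.
  - apply (filterlim_comp _ _ _ sqrt (fun s => C / s) _ (Rbar_locally p_infty));
      [exact filterlim_sqrt_p|].
    apply (filterlim_comp _ _ _ Rinv (Rmult C) _ (Rbar_locally (Rbar_inv p_infty)));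
      [apply filterlim_Rbar_inv; discriminate|].
    pose proof (filterlim_Rbar_mult_l C (Rbar_inv p_infty)) as Hc.
    simpl in Hc. rewrite Rmult_0_r in Hc. exact Hc.
Qed.

(** * Integrals of elementary functions *)

Definition RC_integrand (z c t : R) : R := / sqrt (t + z) * / (t + c).

Lemma continuous_on_pos_RC_integrand z c : 0 <= z -> 0 <= c -> continuous_on_pos (RC_integrand z c).
Proof.
  intros Hz Hc. apply continuous_on_pos_of_ex_derive; intros t Ht; unfold RC_integrand.
  assert (0 < sqrt (t + z)) by (apply sqrt_lt_R0; lra).
  auto_derive; repeat split; lra.
Qed.

Lemma continuous_on_pos_inv_pow_3_2 : continuous_on_pos (fun t => / (t * sqrt t)).
Proof.
  apply continuous_on_pos_of_ex_derive; intros t Ht.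
  assert (0 < sqrt t) by (apply sqrt_lt_R0; lra).
  auto_derive; repeat split; nra.
Qed.

Lemma atan_le_id u : 0 <= u -> 0 <= atan u <= u.
Proof.
  intros Hu. destruct (Req_dec u 0) as [->|Hu0]; [rewrite atan_0; lra|].
  split; [rewrite <- atan_0; left; apply atan_increasing; lra|].
  destruct (MVT_cor2 atan (fun c => / (1 + c²)) 0 u) as (c & Hc & _); [lra| |].
  - intros c _. apply is_derive_Reals, is_derive_atan.
  - rewrite atan_0, !Rminus_0_r in Hc. rewrite Hc.
    assert (1 <= 1 + c²) by (pose proof (Rle_0_sqr c); lra).
    assert (/ (1 + c²) <= 1) by (rewrite <- Rinv_1; apply Rinv_le_contravar; lra).
    assert (0 < / (1 + c²)) by (apply Rinv_0_lt_compat; lra).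
    nra.
Qed.

Lemma is_RInt_0_oo_RC_integrand_0 c : 0 < c -> is_RInt_0_oo (RC_integrand 0 c) (PI / sqrt c).
Proof.
  intros Hc. assert (Hsc : 0 < sqrt c) by (apply sqrt_lt_R0, Hc).
  pose proof (sqrt_sqrt c (Rlt_le _ _ Hc)) as Ec.
  replace (PI / sqrt c) with (PI / sqrt c - 0) by ring.
  apply (is_RInt_0_oo_derive (fun t => 2 / sqrt c * atan (sqrt t / sqrt c))).
  - intros t Ht. assert (Hst : 0 < sqrt t) by (apply sqrt_lt_R0, Ht).
    pose proof (sqrt_sqrt t (Rlt_le _ _ Ht)) as Et.
    auto_derive; [lra|]. unfold RC_integrand. rewrite Rplus_0_r.
    set (s := sqrt t) in *; set (q := sqrt c) in *. rewrite <- Et, <- Ec. field; nra.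
  - apply continuous_on_pos_RC_integrand; lra.
  - apply (filterlim_at_right_0_of_sqrt_bound _ _ (2 / (sqrt c * sqrt c))).
    intros t Ht. assert (Hst : 0 <= sqrt t) by apply sqrt_pos.
    assert (0 <= sqrt t / sqrt c) by (apply Rdiv_le_0_compat; lra).
    destruct (atan_le_id (sqrt t / sqrt c)) as [A0 A1]; auto.
    rewrite Rminus_0_r, Rabs_pos_eq.
    + apply Rle_trans with (2 / sqrt c * (sqrt t / sqrt c)).
      * apply Rmult_le_compat_l; auto; apply Rdiv_le_0_compat; lra.
      * right; field; lra.
    + apply Rmult_le_pos; auto; apply Rdiv_le_0_compat; lra.
  - apply (filterlim_p_infty_of_inv_sqrt_bound _ _ 2).
    intros t Ht. assert (Hst : 0 < sqrt t) by (apply sqrt_lt_R0, Ht).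
    assert (Hq : 0 < sqrt t / sqrt c) by (apply Rdiv_lt_0_compat; lra).
    pose proof (atan_inv _ Hq) as Hi.
    replace (/ (sqrt t / sqrt c)) with (sqrt c / sqrt t) in Hi by (field; lra).
    destruct (atan_le_id (sqrt c / sqrt t)) as [A0 A1]; [apply Rdiv_le_0_compat; lra|].
    replace (2 / sqrt c * atan (sqrt t / sqrt c) - PI / sqrt c)
      with (- (2 / sqrt c * atan (sqrt c / sqrt t))) by (rewrite Hi; field; lra).
    rewrite Rabs_Ropp, Rabs_pos_eq by (apply Rmult_le_pos; auto; apply Rdiv_le_0_compat; lra).
    apply Rle_trans with (2 / sqrt c * (sqrt c / sqrt t)).
    + apply Rmult_le_compat_l; auto; apply Rdiv_le_0_compat; lra.
    + right; field; lra.
Qed.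

Lemma is_RInt_0_oo_RC_integrand_0_div c e : 0 < c -> 0 < e ->
  is_RInt_0_oo (fun t => RC_integrand 0 c t / (t + e))
    (PI / (sqrt c * sqrt e * (sqrt c + sqrt e))).
Proof.
  intros Hc He.
  assert (Hsc : 0 < sqrt c) by (apply sqrt_lt_R0, Hc).
  assert (Hse : 0 < sqrt e) by (apply sqrt_lt_R0, He).
  pose proof (sqrt_sqrt c (Rlt_le _ _ Hc)) as Ec.
  pose proof (sqrt_sqrt e (Rlt_le _ _ He)) as Ee.
  destruct (Req_dec c e) as [<-|Hce].
  - (* [c * RC_integrand 0 c t / (t + c)] is [RC_integrand 0 c t / 2] plus the derivative
       of [sqrt t / (t + c)]. *)
    assert (HD : is_RInt_0_oo (fun t => RC_integrand 0 c t * (c / (t + c) - / 2)) (0 - 0)).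
    { apply (is_RInt_0_oo_derive (fun t => sqrt t / (t + c))).
      - intros t Ht. pose proof (sqrt_sqrt t (Rlt_le _ _ Ht)) as Et.
        assert (0 < sqrt t) by (apply sqrt_lt_R0, Ht).
        auto_derive; [lra|]. unfold RC_integrand; rewrite Rplus_0_r.
        set (s := sqrt t) in *. rewrite <- Et. field; nra.
      - apply continuous_on_pos_of_ex_derive; intros t Ht; unfold RC_integrand.
        assert (0 < sqrt (t + 0)) by (apply sqrt_lt_R0; lra).
        auto_derive; repeat split; lra.
      - apply (filterlim_at_right_0_of_sqrt_bound _ _ (/ c)).
        intros t Ht. assert (0 <= sqrt t) by apply sqrt_pos.
        rewrite Rminus_0_r, Rabs_pos_eq by (apply Rdiv_le_0_compat; lra).
        unfold Rdiv; rewrite Rmult_comm. apply Rmult_le_compat_r; auto.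
        apply Rinv_le_contravar; lra.
      - apply (filterlim_p_infty_of_inv_sqrt_bound _ _ 1).
        intros t Ht. pose proof (sqrt_sqrt t (Rlt_le _ _ Ht)) as Et.
        assert (0 < sqrt t) by (apply sqrt_lt_R0, Ht).
        rewrite Rminus_0_r, Rabs_pos_eq by (apply Rdiv_le_0_compat; lra).
        apply Rle_trans with (sqrt t / (sqrt t * sqrt t)); [rewrite Et|right; field; lra].
        unfold Rdiv; apply Rmult_le_compat_l; [lra|apply Rinv_le_contravar; lra]. }
    pose proof (is_RInt_0_oo_scal (/ c) _ _ (is_RInt_0_oo_plus _ _ _ _ HD
      (is_RInt_0_oo_scal (/ 2) _ _ (is_RInt_0_oo_RC_integrand_0 c Hc)))) as H.
    replace (PI / (sqrt c * sqrt c * (sqrt c + sqrt c)))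
      with (/ c * (0 - 0 + / 2 * (PI / sqrt c))) by (rewrite Ec; field; lra).
    eapply is_RInt_0_oo_ext; [|exact H]. intros t Ht; simpl. field; lra.
  - pose proof (is_RInt_0_oo_scal (/ (e - c)) _ _ (is_RInt_0_oo_minus _ _ _ _
      (is_RInt_0_oo_RC_integrand_0 c Hc) (is_RInt_0_oo_RC_integrand_0 e He))) as H.
    replace (PI / (sqrt c * sqrt e * (sqrt c + sqrt e)))
      with (/ (e - c) * (PI / sqrt c - PI / sqrt e)).
    + eapply is_RInt_0_oo_ext; [|exact H]. intros t Ht; unfold RC_integrand.
      assert (0 < sqrt (t + 0)) by (apply sqrt_lt_R0; lra).
      field. repeat split; intro; [lra|lra|lra|apply Hce; lra].
    + assert (E : e - c = (sqrt e - sqrt c) * (sqrt e + sqrt c)) by nra.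
      rewrite E. field. repeat split; intro; [lra|lra|lra|apply Hce; nra].
Qed.

Lemma RC_integrand_bounds z c t : 0 <= z -> 0 < c -> 0 < t ->
  0 < RC_integrand z c t <= RC_integrand 0 c t.
Proof.
  intros Hz Hc Ht. unfold RC_integrand.
  assert (0 < sqrt (t + 0)) by (apply sqrt_lt_R0; lra).
  assert (sqrt (t + 0) <= sqrt (t + z)) by (apply sqrt_le_1_alt; lra).
  assert (0 < / (t + c)) by (apply Rinv_0_lt_compat; lra).
  split; [apply Rmult_lt_0_compat; [apply Rinv_0_lt_compat|]; lra|].
  apply Rmult_le_compat_r; [lra|]. apply Rinv_le_contravar; lra.
Qed.

Lemma RC_integrand_pos z p t : 0 <= z -> 0 < p -> 0 < t -> 0 < RC_integrand z p t.
Proof. intros Hz Hp Ht. apply RC_integrand_bounds; auto. Qed.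

Lemma is_RInt_0_oo_RC_integrand z c : 0 <= z -> 0 < c ->
  is_RInt_0_oo (RC_integrand z c) (2 * RC z c).
Proof.
  intros Hz Hc.
  replace (2 * RC z c) with (int0inf (RC_integrand z c)) by (unfold RC, RC_integrand; field).
  apply is_RInt_0_oo_int0inf, (ex_RInt_0_oo_dominated _ (RC_integrand 0 c) (PI / sqrt c)).
  - apply continuous_on_pos_RC_integrand; lra.
  - intros t Ht; destruct (RC_integrand_bounds z c t Hz Hc Ht); lra.
  - apply is_RInt_0_oo_RC_integrand_0, Hc.
Qed.

Lemma RC_0_eq c : 0 < c -> RC 0 c = PI / (2 * sqrt c).
Proof.
  intros Hc. assert (0 < sqrt c) by (apply sqrt_lt_R0, Hc).
  pose proof (is_RInt_0_oo_unique _ _ _ (is_RInt_0_oo_RC_integrand 0 c (Rle_refl 0) Hc)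
    (is_RInt_0_oo_RC_integrand_0 c Hc)) as E.
  replace (PI / (2 * sqrt c)) with (/ 2 * (PI / sqrt c)) by (field; lra).
  rewrite <- E. field.
Qed.

(** * The defect of 1 / sqrt ((t + x) (t + y)) from its value at t = 0 *)

Lemma Rdiv_le_Rdiv (a b c d : R) : 0 < b -> 0 < d -> a * d <= c * b -> a / b <= c / d.
Proof.
  intros Hb Hd H. apply (Rmult_le_reg_r (b * d)); [nra|].
  replace (a / b * (b * d)) with (a * d) by (field; lra).
  replace (c / d * (b * d)) with (c * b) by (field; lra). exact H.
Qed.

Lemma Rdiv_lt_Rdiv (a b c d : R) : 0 < b -> 0 < d -> a * d < c * b -> a / b < c / d.
Proof.
  intros Hb Hd H. apply (Rmult_lt_reg_r (b * d)); [nra|].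
  replace (a / b * (b * d)) with (a * d) by (field; lra).
  replace (c / d * (b * d)) with (c * b) by (field; lra). exact H.
Qed.

Lemma sqrt_mul_le_mean x y : 0 <= x -> 0 <= y -> sqrt (x * y) <= (x + y) / 2.
Proof.
  intros Hx Hy. pose proof (sqrt_sqrt (x * y) ltac:(nra)). pose proof (sqrt_pos (x * y)).
  pose proof (Rle_0_sqr (x - y)). unfold Rsqr in *.
  destruct (Rlt_or_le ((x + y) / 2) (sqrt (x * y))); [nra|lra].
Qed.

Lemma sqrt_mul_lt_mean x y : 0 <= x -> 0 <= y -> x <> y -> sqrt (x * y) < (x + y) / 2.
Proof.
  intros Hx Hy Hxy. pose proof (sqrt_sqrt (x * y) ltac:(nra)). pose proof (sqrt_pos (x * y)).
  assert (0 < (x - y) * (x - y)) by (apply Rsqr_pos_lt; lra).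
  destruct (Rlt_or_le (sqrt (x * y)) ((x + y) / 2)); [lra|nra].
Qed.

Definition defect (x y t : R) : R := / sqrt (x * y) - / sqrt ((t + x) * (t + y)).

Lemma defect_diag c t : 0 < c -> 0 <= t -> defect c c t = t / (c * (t + c)).
Proof.
  intros Hc Ht. unfold defect. rewrite !sqrt_square by lra. field; lra.
Qed.

Lemma defect_diag_pos c t : 0 < c -> 0 < t -> 0 < defect c c t.
Proof. intros Hc Ht. rewrite defect_diag by lra. apply Rdiv_lt_0_compat; nra. Qed.

Lemma continuous_on_pos_defect x y : 0 < x -> 0 < y -> continuous_on_pos (defect x y).
Proof.
  intros Hx Hy. apply continuous_on_pos_of_ex_derive; intros t Ht; unfold defect.
  assert (0 < sqrt ((t + x) * (t + y))) by (apply sqrt_lt_R0; nra).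
  auto_derive; repeat split; nra.
Qed.

Section DefectBounds.

Variables x y t : R.
Hypotheses (Hx : 0 < x) (Hy : 0 < y) (Ht : 0 < t).

Local Notation g := (sqrt (x * y)).
Local Notation a := ((x + y) / 2).
Local Notation Q := (sqrt ((t + x) * (t + y))).

Let Hg : 0 < g. Proof. apply sqrt_lt_R0; nra. Qed.
Let Hg2 : g * g = x * y. Proof. apply sqrt_sqrt; nra. Qed.
Let HQ : 0 < Q. Proof. apply sqrt_lt_R0; nra. Qed.
Let HQ2 : Q * Q = t * t + 2 * a * t + g * g.
Proof. rewrite Hg2, sqrt_sqrt by nra. field. Qed.

Let defect_eq : defect x y t = (Q - g) / (g * Q).
Proof. unfold defect. field; lra. Qed.

Let scaled_defect_diag_eq : a / g * defect g g t = a * t / (g * g * (t + g)).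
Proof. rewrite defect_diag by lra. field; lra. Qed.

Let cross_eq : g * (Q - g) * (t + g) * (Q + g) = t * (g * (t + 2 * a) * (t + g)).
Proof.
  replace (g * (Q - g) * (t + g) * (Q + g)) with (g * (t + g) * (Q * Q - g * g)) by ring.
  rewrite HQ2; ring.
Qed.

Let Hga : g <= a. Proof. apply sqrt_mul_le_mean; lra. Qed.
Let HtQ : t + g <= Q. Proof. destruct (Rlt_or_le Q (t + g)); [nra|lra]. Qed.

Let mean_bound_cross : g * (Q - g) * (t + g) <= a * t * Q.
Proof.
  assert (0 <= a * g * (Q - (t + g))) by (apply Rmult_le_pos; nra).
  assert (0 <= (a - g) * (t * t + t * (2 * a + g))) by (apply Rmult_le_pos; nra).
  apply (Rmult_le_reg_r (Q + g)); [lra|]. rewrite cross_eq. nra.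
Qed.

Lemma defect_mean_bounds :
  defect g g t <= defect x y t <= a / g * defect g g t.
Proof.
  rewrite scaled_defect_diag_eq, defect_diag, defect_eq by lra.
  split; apply Rdiv_le_Rdiv; try (repeat apply Rmult_lt_0_compat; lra); nra.
Qed.

Let mean_bound_cross_strict (Hga' : g < a) : g * (Q - g) * (t + g) < a * t * Q.
Proof.
  assert (0 <= a * g * (Q - (t + g))) by (apply Rmult_le_pos; nra).
  assert (0 < (a - g) * (t * t + t * (2 * a + g))) by (apply Rmult_lt_0_compat; nra).
  apply (Rmult_lt_reg_r (Q + g)); [lra|]. rewrite cross_eq. nra.
Qed.

Lemma defect_mean_bounds_strict :
  x <> y -> defect g g t < defect x y t < a / g * defect g g t.
Proof.
  intros Hxy. pose proof (sqrt_mul_lt_mean x y ltac:(lra) ltac:(lra) Hxy) as Hga'.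
  assert (HtQ' : t + g < Q) by (destruct (Rlt_or_le (t + g) Q); [lra|nra]).
  rewrite scaled_defect_diag_eq, defect_diag, defect_eq by lra.
  split; apply Rdiv_lt_Rdiv; try (repeat apply Rmult_lt_0_compat; lra).
  - assert (0 < g * g * (Q - (t + g))) by (repeat apply Rmult_lt_0_compat; lra). nra.
  - pose proof (mean_bound_cross_strict Hga'). nra.
Qed.

End DefectBounds.

Lemma defect_pos_lt_inv x y t : 0 < x -> 0 < y -> 0 < t ->
  0 < defect x y t < / sqrt (x * y).
Proof.
  intros Hx Hy Ht. assert (0 < sqrt (x * y)) by (apply sqrt_lt_R0; nra).
  pose proof (defect_diag_pos (sqrt (x * y)) t ltac:(lra) Ht).
  destruct (defect_mean_bounds x y t Hx Hy Ht). split; [lra|].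
  unfold defect. assert (0 < / sqrt ((t + x) * (t + y))) by (apply Rinv_0_lt_compat, sqrt_lt_R0; nra). lra.
Qed.

Section DefectIntegral.

Variables (x y : R) (phi : R -> R).
Hypotheses (Hx : 0 < x) (Hy : 0 < y).
Hypotheses (Cphi : continuous_on_pos phi) (Hphi : forall t, 0 < t -> 0 < phi t).

Local Notation g := (sqrt (x * y)).
Local Notation k := ((x + y) / 2 / sqrt (x * y)).

Let continuous_phi_defect u v : 0 < u -> 0 < v -> continuous_on_pos (fun t => phi t * defect u v t).
Proof. intros; apply continuous_on_pos_mult, continuous_on_pos_defect; auto. Qed.

Lemma is_RInt_0_oo_defect_sandwich (A : R) :
  is_RInt_0_oo (fun t => phi t * defect g g t) A ->
  exists B : R, is_RInt_0_oo (fun t => phi t * defect x y t) B /\ 0 < A /\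
    A <= B <= k * A /\ (x <> y -> A < B < k * A).
Proof.
  intros HA.
  assert (Hg : 0 < g) by (apply sqrt_lt_R0; nra).
  assert (Hlow : forall t, 0 < t -> 0 < phi t * defect g g t)
    by (intros t Ht; apply Rmult_lt_0_compat; [apply Hphi|apply defect_diag_pos]; auto).
  assert (Hbounds : forall t, 0 < t ->
    phi t * defect g g t <= phi t * defect x y t <= k * (phi t * defect g g t)).
  { intros t Ht. destruct (defect_mean_bounds x y t Hx Hy Ht).
    specialize (Hphi t Ht). split; nra. }
  assert (HkA := is_RInt_0_oo_scal k _ _ HA).
  assert (Hdom : forall t, 0 < t -> 0 <= phi t * defect x y t <= k * (phi t * defect g g t))
    by (intros t Ht; specialize (Hbounds t Ht); specialize (Hlow t Ht); lra).
  destruct (ex_RInt_0_oo_dominated _ _ _ (continuous_phi_defect x y Hx Hy) Hdom HkA) as [B HB].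
  exists B; split; [exact HB|].
  split; [exact (is_RInt_0_oo_gt_0 _ _ (continuous_phi_defect g g Hg Hg) Hlow HA)|].
  split.
  - split; [apply (is_RInt_0_oo_le _ _ _ _ (fun t Ht => proj1 (Hbounds t Ht)) HA HB)
           |apply (is_RInt_0_oo_le _ _ _ _ (fun t Ht => proj2 (Hbounds t Ht)) HB HkA)].
  - intros Hxy.
    assert (Hstrict : forall t, 0 < t ->
      phi t * defect g g t < phi t * defect x y t < k * (phi t * defect g g t)).
    { intros t Ht. destruct (defect_mean_bounds_strict x y t Hx Hy Ht Hxy).
      specialize (Hphi t Ht). split; nra. }
    split.
    + apply (is_RInt_0_oo_lt _ _ _ _ (continuous_on_pos_minus _ _
        (continuous_phi_defect x y Hx Hy) (continuous_phi_defect g g Hg Hg))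
        (fun t Ht => proj1 (Hstrict t Ht)) HA HB).
    + apply (is_RInt_0_oo_lt _ _ _ _ (continuous_on_pos_minus _ _
        (continuous_on_pos_scal k _ (continuous_phi_defect g g Hg Hg)) (continuous_phi_defect x y Hx Hy))
        (fun t Ht => proj2 (Hstrict t Ht)) HB HkA).
Qed.

End DefectIntegral.

Lemma ratio_between (P : Prop) (A B k : R) :
  0 < A -> A <= B <= k * A -> (P -> k = 1) -> (~ P -> A < B < k * A) ->
  1 <= B / A <= k /\ (B / A = 1 <-> P) /\ (B / A = k <-> P).
Proof.
  intros HA HB Hk Hlt.
  set (th := B / A). assert (EB : B = th * A) by (unfold th; field; lra).
  clearbody th. subst B.
  assert (Hth : 1 <= th <= k) by (split; nra).
  split; [exact Hth|].
  destruct (classic P) as [HP|HnP].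
  - rewrite (Hk HP) in *. repeat split; intros; auto; lra.
  - specialize (Hlt HnP). repeat split; intros E; (contradiction || (subst th; nra)).
Qed.

Lemma mean_div_geometric_mean_diag x : 0 < x -> (x + x) / 2 / sqrt (x * x) = 1.
Proof. intros Hx. rewrite sqrt_square by lra. field; lra. Qed.

(** * R_J and R_G as integrals of the defect *)

Section RCIntegrand.

Variables z p : R.
Hypotheses (Hz : 0 <= z) (Hp : 0 < p).

Lemma ex_RInt_0_oo_RC_integrand_div c : 0 < c ->
  ex_RInt_0_oo (fun t => RC_integrand z p t / (t + c)).
Proof.
  intros Hc. apply (ex_RInt_0_oo_dominated _ (fun t => / c * RC_integrand z p t) (/ c * (2 * RC z p))).
  - apply continuous_on_pos_div_shift; [lra|apply continuous_on_pos_RC_integrand; lra].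
  - intros t Ht. destruct (RC_integrand_bounds z p t Hz Hp Ht).
    unfold Rdiv; rewrite Rmult_comm. split.
    + apply Rmult_le_pos; [left; apply Rinv_0_lt_compat|]; lra.
    + apply Rmult_le_compat_r; [lra|apply Rinv_le_contravar; lra].
  - apply is_RInt_0_oo_scal, is_RInt_0_oo_RC_integrand; lra.
Qed.

Lemma is_RInt_0_oo_RC_integrand_div c : 0 < c -> c <> p ->
  is_RInt_0_oo (fun t => RC_integrand z p t / (t + c)) (2 * (RC z p - RC z c) / (c - p)).
Proof.
  intros Hc Hcp.
  pose proof (is_RInt_0_oo_scal (/ (c - p)) _ _ (is_RInt_0_oo_minus _ _ _ _
    (is_RInt_0_oo_RC_integrand z p Hz Hp) (is_RInt_0_oo_RC_integrand z c Hz Hc))) as H.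
  replace (2 * (RC z p - RC z c) / (c - p)) with (/ (c - p) * (2 * RC z p - 2 * RC z c))
    by (field; intro; apply Hcp; lra).
  eapply is_RInt_0_oo_ext; [|exact H]. intros t Ht; unfold RC_integrand.
  assert (0 < sqrt (t + z)) by (apply sqrt_lt_R0; lra).
  field. repeat split; intro; [lra|lra|lra|apply Hcp; lra].
Qed.

Lemma is_RInt_0_oo_RC_integrand_defect_diag c L : 0 < c ->
  is_RInt_0_oo (fun t => RC_integrand z p t / (t + c)) L ->
  is_RInt_0_oo (fun t => RC_integrand z p t * defect c c t) (2 * RC z p / c - L).
Proof.
  intros Hc HL.
  replace (2 * RC z p / c - L) with (/ c * (2 * RC z p) - L) by (field; lra).
  eapply is_RInt_0_oo_ext; [|exact (is_RInt_0_oo_minus _ _ _ _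
    (is_RInt_0_oo_scal (/ c) _ _ (is_RInt_0_oo_RC_integrand z p Hz Hp)) HL)].
  intros t Ht. rewrite defect_diag by lra. field; lra.
Qed.

End RCIntegrand.

Lemma RJ_eq_defect_integral x y z p B : 0 < x -> 0 < y -> 0 <= z -> 0 < p ->
  is_RInt_0_oo (fun t => RC_integrand z p t * defect x y t) B ->
  RJ x y z p = 3 / sqrt (x * y) * RC z p - 3 / 2 * B.
Proof.
  intros Hx Hy Hz Hp HB.
  assert (Hg : 0 < sqrt (x * y)) by (apply sqrt_lt_R0; nra).
  assert (HJ : is_RInt_0_oo (fun t => / sqrt ((t + x) * (t + y) * (t + z)) * / (t + p))
                 (/ sqrt (x * y) * (2 * RC z p) - B)).
  { eapply is_RInt_0_oo_ext; [|exact (is_RInt_0_oo_minus _ _ _ _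
      (is_RInt_0_oo_scal _ _ _ (is_RInt_0_oo_RC_integrand z p Hz Hp)) HB)].
    intros t Ht. unfold RC_integrand, defect.
    rewrite (sqrt_mult ((t + x) * (t + y)) (t + z)) by nra.
    assert (0 < sqrt (t + z)) by (apply sqrt_lt_R0; lra).
    assert (0 < sqrt ((t + x) * (t + y))) by (apply sqrt_lt_R0; nra).
    field. repeat split; lra. }
  unfold RJ. rewrite (int0inf_unique _ _ HJ). field; lra.
Qed.

Section RG.

Variables x y : R.
Hypotheses (Hx : 0 < x) (Hy : 0 < y).

Local Notation g := (sqrt (x * y)).
Local Notation a := ((x + y) / 2).
Local Notation Q t := (sqrt ((t + x) * (t + y))).

Let RG_primitive t := 4 * a * sqrt t / Q t - 2 * (x * y) * defect x y t / sqrt t.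

Let is_derive_RG_primitive t : 0 < t ->
  is_derive RG_primitive t (x * y * (/ (t * sqrt t) * defect x y t) -
    / sqrt ((t + x) * (t + y) * (t + 0)) * (x / (t + x) + y / (t + y) + 0 / (t + 0)) * t).
Proof.
  intros Ht. unfold RG_primitive, defect.
  assert (Hs : 0 < sqrt t) by (apply sqrt_lt_R0, Ht).
  assert (HQ : 0 < Q t) by (apply sqrt_lt_R0; nra).
  assert (Hg : 0 < g) by (apply sqrt_lt_R0; nra).
  pose proof (sqrt_sqrt t (Rlt_le _ _ Ht)) as Es.
  pose proof (sqrt_sqrt ((t + x) * (t + y)) ltac:(nra)) as EQ.
  pose proof (sqrt_sqrt (x * y) ltac:(nra)) as Eg.
  assert (Em : (t + x) * (t + y) = t * t + (x + y) * t + x * y) by ring.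
  auto_derive; [repeat split; nra|].
  rewrite Rplus_0_r, (sqrt_mult ((t + x) * (t + y)) t) by nra.
  replace (x / (t + x) + y / (t + y) + 0 / t)
    with ((2 * (x * y) + t * (x + y)) / ((t + x) * (t + y))) by (field; split; lra).
  replace (1 * (t + y) + (t + x) * 1) with (2 * t + (x + y)) by ring.
  set (s := sqrt t) in *; set (q := Q t) in *; set (G := g) in *.
  rewrite <- EQ, <- Eg. rewrite Em, <- Eg in EQ.
  set (m := x + y) in *. rewrite <- Es in EQ |- *.
  clearbody s q G m. clear Em.
  assert (Hm : m = (q * q - s * s * (s * s) - G * G) / (s * s)) by (rewrite EQ; field; lra).
  subst m. field. repeat split; lra.
Qed.

Let Hg : 0 < g.
Proof. apply sqrt_lt_R0; nra. Qed.

Let primitive_term1_bounds t : 0 < t ->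
  0 <= 4 * a * sqrt t / Q t <= 4 * a / g * sqrt t /\ 4 * a * sqrt t / Q t <= 4 * a / sqrt t.
Proof.
  intros Ht.
  assert (Hs : 0 < sqrt t) by (apply sqrt_lt_R0, Ht).
  pose proof (sqrt_sqrt t (Rlt_le _ _ Ht)) as Es.
  pose proof (sqrt_sqrt ((t + x) * (t + y)) ltac:(nra)) as EQ.
  assert (HQ : 0 < Q t) by (apply sqrt_lt_R0; nra).
  assert (HQg : g <= Q t) by (apply sqrt_le_1_alt; nra).
  assert (HQt : t <= Q t) by (destruct (Rlt_or_le (Q t) t); [nra|lra]).
  assert (Ha : 0 < 4 * a) by lra.
  replace (4 * a / g * sqrt t) with (4 * a * sqrt t / g) by (field; lra).
  repeat split.
  - apply Rdiv_le_0_compat; nra.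
  - apply Rdiv_le_Rdiv; [lra|lra|]. apply Rmult_le_compat_l; nra.
  - apply Rdiv_le_Rdiv; [lra|lra|]. rewrite Rmult_assoc, Es. apply Rmult_le_compat_l; lra.
Qed.

Let primitive_term2_bounds t : 0 < t ->
  0 <= 2 * (x * y) * defect x y t / sqrt t <= 2 * a / g * sqrt t /\
  2 * (x * y) * defect x y t / sqrt t <= 2 * g / sqrt t.
Proof.
  intros Ht.
  assert (Hs : 0 < sqrt t) by (apply sqrt_lt_R0, Ht).
  pose proof (sqrt_sqrt t (Rlt_le _ _ Ht)) as Es.
  pose proof (sqrt_sqrt (x * y) ltac:(nra)) as Eg.
  destruct (defect_mean_bounds x y t Hx Hy Ht) as [Hlow Hup].
  rewrite defect_diag in Hlow, Hup by lra.
  assert (0 <= t / (g * (t + g))) by (apply Rdiv_le_0_compat; nra).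
  destruct (defect_pos_lt_inv x y t Hx Hy Ht) as [_ Hd].
  assert (Hk : a / g * (t / (g * (t + g))) <= a * t / (g * g * g)).
  { replace (a / g * (t / (g * (t + g)))) with (a * t / (g * g * (t + g))) by (field; lra).
    unfold Rdiv; apply Rmult_le_compat_l; [nra|].
    apply Rinv_le_contravar; [repeat apply Rmult_lt_0_compat; lra|]. apply Rmult_le_compat_l; nra. }
  replace (2 * (x * y)) with (2 * (g * g)) by (rewrite Eg; ring).
  assert (Hdiv : forall u v, u <= v -> 2 * (g * g) * u / sqrt t <= 2 * (g * g) * v / sqrt t).
  { intros u v Huv. unfold Rdiv. apply Rmult_le_compat_r; [left; apply Rinv_0_lt_compat; lra|].
    apply Rmult_le_compat_l; nra. }
  repeat split.
  - apply Rdiv_le_0_compat; nra.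
  - eapply Rle_trans; [apply (Hdiv _ (a * t / (g * g * g))); lra|].
    right. set (s := sqrt t) in *. rewrite <- Es. field; lra.
  - eapply Rle_trans; [apply (Hdiv _ (/ g)); lra|]. right. field; lra.
Qed.

Lemma RG_eq_defect_integral H :
  is_RInt_0_oo (fun t => / (t * sqrt t) * defect x y t) H -> RG x y 0 = x * y / 4 * H.
Proof.
  intros HH.
  set (RG_integrand := fun t => / sqrt ((t + x) * (t + y) * (t + 0)) *
                                (x / (t + x) + y / (t + y) + 0 / (t + 0)) * t).
  assert (H0 : is_RInt_0_oo (fun t => x * y * (/ (t * sqrt t) * defect x y t) - RG_integrand t) (0 - 0)).
  { apply (is_RInt_0_oo_derive RG_primitive); [exact is_derive_RG_primitive| | |].
    - apply continuous_on_pos_minus.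
      + apply continuous_on_pos_scal, continuous_on_pos_mult;
          [apply continuous_on_pos_inv_pow_3_2|apply continuous_on_pos_defect; lra].
      + apply continuous_on_pos_of_ex_derive; intros t Ht; unfold RG_integrand.
        assert (0 < (t + x) * (t + y) * (t + 0)) by (apply Rmult_lt_0_compat; nra).
        assert (0 < sqrt ((t + x) * (t + y) * (t + 0))) by (apply sqrt_lt_R0; lra).
        auto_derive; repeat split; nra.
    - apply (filterlim_at_right_0_of_sqrt_bound _ _ (4 * a / g + 2 * a / g)).
      intros t Ht. destruct (primitive_term1_bounds t ltac:(lra)), (primitive_term2_bounds t ltac:(lra)).
      unfold RG_primitive. rewrite Rminus_0_r. apply Rabs_le; lra.
    - apply (filterlim_p_infty_of_inv_sqrt_bound _ _ (4 * a + 2 * g)).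
      intros t Ht. destruct (primitive_term1_bounds t Ht), (primitive_term2_bounds t Ht).
      unfold RG_primitive. rewrite Rminus_0_r. unfold Rdiv in *. apply Rabs_le; lra. }
  assert (HG : is_RInt_0_oo RG_integrand (x * y * H - (0 - 0))).
  { eapply is_RInt_0_oo_ext; [|exact (is_RInt_0_oo_minus _ _ _ _ (is_RInt_0_oo_scal (x * y) _ _ HH) H0)].
    intros t Ht; cbv beta. ring. }
  change (/ 4 * int0inf RG_integrand = x * y / 4 * H). rewrite (int0inf_unique _ _ HG). field.
Qed.

End RG.

Lemma RJ_eq_RG_defect_integral x y z p B2 : 0 < x -> 0 < y -> 0 <= z -> 0 < p ->
  is_RInt_0_oo (fun t => (/ (t * sqrt t) - RC_integrand z p t) * defect x y t) B2 ->
  RJ x y z p = 3 / sqrt (x * y) * RC z p - 6 / (x * y) * RG x y 0 + 3 / 2 * B2.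
Proof.
  intros Hx Hy Hz Hp HB2.
  assert (Hdom : forall t, 0 < t ->
    0 <= RC_integrand z p t * defect x y t <= / sqrt (x * y) * RC_integrand z p t).
  { intros t Ht. destruct (defect_pos_lt_inv x y t Hx Hy Ht).
    pose proof (RC_integrand_pos z p t Hz Hp Ht). split; nra. }
  assert (HB := is_RInt_0_oo_int0inf _ (ex_RInt_0_oo_dominated _ _ _
    (continuous_on_pos_mult _ _ (continuous_on_pos_RC_integrand z p Hz (Rlt_le _ _ Hp))
       (continuous_on_pos_defect x y Hx Hy))
    Hdom (is_RInt_0_oo_scal _ _ _ (is_RInt_0_oo_RC_integrand z p Hz Hp)))).
  assert (HH : is_RInt_0_oo (fun t => / (t * sqrt t) * defect x y t)
                 (B2 + int0inf (fun t => RC_integrand z p t * defect x y t))).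
  { eapply is_RInt_0_oo_ext; [|exact (is_RInt_0_oo_plus _ _ _ _ HB2 HB)]. intros t Ht; cbv beta; ring. }
  rewrite (RJ_eq_defect_integral x y z p _ Hx Hy Hz Hp HB), (RG_eq_defect_integral x y Hx Hy _ HH).
  assert (0 < sqrt (x * y)) by (apply sqrt_lt_R0; nra). field. repeat split; nra.
Qed.

(** * Bounds for the R_C integrand *)

Lemma RC_integrand_upper_bound z p t : 0 <= z -> 0 < p -> 0 < t ->
  RC_integrand z p t < RC_integrand 0 (sqrt (3 * p * (p + 2 * z)) / 2) t.
Proof.
  intros Hz Hp Ht. set (b := sqrt (3 * p * (p + 2 * z)) / 2).
  assert (Hb2 : b * b = 3 * p * (p + 2 * z) / 4).
  { unfold b. pose proof (sqrt_sqrt (3 * p * (p + 2 * z)) ltac:(nra)) as E.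
    set (r := sqrt _) in *. rewrite <- E. field. }
  assert (Hb : 0 < b) by (apply Rdiv_lt_0_compat; [apply sqrt_lt_R0; nra|lra]).
  assert (H2b : 2 * b <= z + 2 * p).
  { destruct (Rlt_or_le (z + 2 * p) (2 * b)); [|lra].
    pose proof (Rle_0_sqr (z - p)). unfold Rsqr in *. nra. }
  unfold RC_integrand. rewrite <- !Rinv_mult.
  assert (Hs : 0 < sqrt (t + 0)) by (apply sqrt_lt_R0; lra).
  assert (Hsz : 0 < sqrt (t + z)) by (apply sqrt_lt_R0; lra).
  apply Rinv_lt_contravar; [repeat apply Rmult_lt_0_compat; lra|].
  apply Rsqr_incrst_0; [unfold Rsqr|nra|nra].
  replace (sqrt (t + 0) * (t + b) * (sqrt (t + 0) * (t + b)))
    with (sqrt (t + 0) * sqrt (t + 0) * ((t + b) * (t + b))) by ring.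
  replace (sqrt (t + z) * (t + p) * (sqrt (t + z) * (t + p)))
    with (sqrt (t + z) * sqrt (t + z) * ((t + p) * (t + p))) by ring.
  rewrite !sqrt_sqrt, Rplus_0_r by lra.
  assert (0 <= (z + 2 * p - 2 * b) * t * t) by (apply Rmult_le_pos; nra).
  assert (0 < t * (p * p + 2 * p * z - b * b)) by (apply Rmult_lt_0_compat; nra).
  assert (0 <= z * p * p) by (apply Rmult_le_pos; nra).
  nra.
Qed.

(* The difference of the two sides, expanded in powers of [t - d / 2], has positive coefficients. *)
Lemma RC_integrand_lower_bound_poly z p t : 0 <= z -> 0 < p -> (z + 2 * p) / 6 < t ->
  let d := (z + 2 * p) / 3 in
  (t + z) * ((t + p) * (t + p)) * ((2 * t - d) * (2 * t - d)) < 4 * (t * t * t) * ((t + d) * (t + d)).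
Proof.
  intros Hz Hp Ht d.
  assert (Hd : 0 < d) by (unfold d; lra).
  set (u := t - d / 2). assert (Hu : 0 < u) by (unfold u, d in *; lra).
  assert (Et : t = u + d / 2) by (unfold u; ring).
  assert (Ep : p = (3 * d - z) / 2) by (unfold d; field).
  assert (Hz3 : z < 3 * d) by (unfold d; lra).
  clearbody u d. subst t p.
  assert (H2 : 0 < 15 * d ^ 3 - 12 * d ^ 2 * z + 15 / 2 * d * z ^ 2 - z ^ 3).
  { assert (0 <= z ^ 2 * (3 * d - z)) by (apply Rmult_le_pos; nra).
    assert (0 <= d * ((z - 4 / 3 * d) * (z - 4 / 3 * d))) by (apply Rmult_le_pos; [lra|apply Rle_0_sqr]).
    assert (0 < d * d * d) by (repeat apply Rmult_lt_0_compat; lra).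
    nra. }
  assert (H3 : 0 < 3 * (2 * d ^ 2 - 2 * d * z + z ^ 2)) by nra.
  enough (E : 4 * ((u + d / 2) * (u + d / 2) * (u + d / 2)) * ((u + d / 2 + d) * (u + d / 2 + d))
      - (u + d / 2 + z) * ((u + d / 2 + (3 * d - z) / 2) * (u + d / 2 + (3 * d - z) / 2))
        * ((2 * (u + d / 2) - d) * (2 * (u + d / 2) - d))
    = 9 / 8 * d ^ 5 + 33 / 4 * d ^ 4 * u
      + (15 * d ^ 3 - 12 * d ^ 2 * z + 15 / 2 * d * z ^ 2 - z ^ 3) * u ^ 2
      + 3 * (2 * d ^ 2 - 2 * d * z + z ^ 2) * u ^ 3).
  { assert (0 < d ^ 5) by (apply pow_lt, Hd).
    assert (0 < d ^ 4 * u) by (apply Rmult_lt_0_compat; [apply pow_lt|]; lra).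
    assert (0 < (15 * d ^ 3 - 12 * d ^ 2 * z + 15 / 2 * d * z ^ 2 - z ^ 3) * u ^ 2)
      by (apply Rmult_lt_0_compat; [|apply pow_lt]; lra).
    assert (0 < 3 * (2 * d ^ 2 - 2 * d * z + z ^ 2) * u ^ 3)
      by (apply Rmult_lt_0_compat; [|apply pow_lt]; lra).
    lra. }
  field.
Qed.

Lemma RC_integrand_lower_bound z p t : 0 <= z -> 0 < p -> 0 < t ->
  let d := (z + 2 * p) / 3 in
  (2 * t - d) / (2 * (t * sqrt t) * (t + d)) < RC_integrand z p t.
Proof.
  intros Hz Hp Ht d.
  assert (Hd : 0 < d) by (unfold d; lra).
  assert (Hs : 0 < sqrt t) by (apply sqrt_lt_R0, Ht).
  assert (Hsz : 0 < sqrt (t + z)) by (apply sqrt_lt_R0; lra).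
  pose proof (RC_integrand_pos z p t Hz Hp Ht) as Hw.
  destruct (Rle_or_lt (2 * t) d) as [Hsmall|Hlarge].
  - enough ((2 * t - d) / (2 * (t * sqrt t) * (t + d)) <= 0) by lra.
    apply Rmult_le_0_r; [lra|]. left; apply Rinv_0_lt_compat; repeat apply Rmult_lt_0_compat; lra.
  - unfold RC_integrand. rewrite <- Rinv_mult, <- (Rmult_1_l (/ _)). fold (Rdiv 1 (sqrt (t + z) * (t + p))).
    apply Rdiv_lt_Rdiv; [repeat apply Rmult_lt_0_compat; lra|apply Rmult_lt_0_compat; lra|].
    rewrite Rmult_1_l. apply Rsqr_incrst_0; [unfold Rsqr|repeat apply Rmult_le_pos; lra..].
    replace (2 * (t * sqrt t) * (t + d) * (2 * (t * sqrt t) * (t + d)))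
      with (4 * (t * t * (sqrt t * sqrt t)) * ((t + d) * (t + d))) by ring.
    replace ((2 * t - d) * (sqrt (t + z) * (t + p)) * ((2 * t - d) * (sqrt (t + z) * (t + p))))
      with (sqrt (t + z) * sqrt (t + z) * ((t + p) * (t + p)) * ((2 * t - d) * (2 * t - d))) by ring.
    rewrite !sqrt_sqrt by lra.
    apply RC_integrand_lower_bound_poly; unfold d in Hlarge; lra.
Qed.

Lemma RC_integrand_lt_inv_pow_3_2 z p t : 0 <= z -> 0 < p -> 0 < t ->
  RC_integrand z p t < / (t * sqrt t).
Proof.
  intros Hz Hp Ht. destruct (RC_integrand_bounds z p t Hz Hp Ht) as [_ Hle].
  eapply Rle_lt_trans; [exact Hle|]. unfold RC_integrand. rewrite Rplus_0_r, <- Rinv_mult.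
  assert (0 < sqrt t) by (apply sqrt_lt_R0, Ht).
  apply Rinv_lt_contravar; [repeat apply Rmult_lt_0_compat; lra|nra].
Qed.

Section WeightBounds.

Variables z p g t : R.
Hypotheses (Hz : 0 <= z) (Hp : 0 < p) (Hg : 0 < g) (Ht : 0 < t).

Let Hs : 0 < sqrt t. Proof. apply sqrt_lt_R0, Ht. Qed.

Lemma defect_weight_lower :
  let b := sqrt (3 * p * (p + 2 * z)) / 2 in
  b / g * (RC_integrand 0 b t / (t + g)) < (/ (t * sqrt t) - RC_integrand z p t) * defect g g t.
Proof.
  intros b. assert (Hb : 0 < b) by (apply Rdiv_lt_0_compat; [apply sqrt_lt_R0; nra|lra]).
  pose proof (RC_integrand_upper_bound z p t Hz Hp Ht) as Hw. fold b in Hw.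
  rewrite defect_diag by lra.
  assert (E : b / g * (RC_integrand 0 b t / (t + g))
              = (/ (t * sqrt t) - RC_integrand 0 b t) * (t / (g * (t + g)))).
  { unfold RC_integrand. rewrite Rplus_0_r. field. repeat split; lra. }
  rewrite E. apply Rmult_lt_compat_r; [apply Rdiv_lt_0_compat; nra|lra].
Qed.

Lemma defect_weight_upper :
  let d := (z + 2 * p) / 3 in
  (/ (t * sqrt t) - RC_integrand z p t) * defect g g t < 3 / 2 * (d / g) * (RC_integrand 0 d t / (t + g)).
Proof.
  intros d. assert (Hd : 0 < d) by (unfold d; lra).
  pose proof (RC_integrand_lower_bound z p t Hz Hp Ht) as Hw. fold d in Hw.
  rewrite defect_diag by lra.
  assert (E : 3 / 2 * (d / g) * (RC_integrand 0 d t / (t + g))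
              = (/ (t * sqrt t) - (2 * t - d) / (2 * (t * sqrt t) * (t + d))) * (t / (g * (t + g)))).
  { unfold RC_integrand. rewrite Rplus_0_r. field. repeat split; lra. }
  rewrite E. apply Rmult_lt_compat_r; [apply Rdiv_lt_0_compat; nra|lra].
Qed.

End WeightBounds.

Lemma continuous_on_pos_defect_weight z p g : 0 <= z -> 0 < p -> 0 < g ->
  continuous_on_pos (fun t => (/ (t * sqrt t) - RC_integrand z p t) * defect g g t).
Proof.
  intros Hz Hp Hg. apply continuous_on_pos_mult; [apply continuous_on_pos_minus|].
  - apply continuous_on_pos_inv_pow_3_2.
  - apply continuous_on_pos_RC_integrand; lra.
  - apply continuous_on_pos_defect; lra.
Qed.

Lemma is_RInt_0_oo_defect_weight_diag z p g A : 0 <= z -> 0 < p -> 0 < g ->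
  is_RInt_0_oo (fun t => RC_integrand z p t * defect g g t) A ->
  is_RInt_0_oo (fun t => (/ (t * sqrt t) - RC_integrand z p t) * defect g g t) (/ g * (PI / sqrt g) - A).
Proof.
  intros Hz Hp Hg HA.
  eapply is_RInt_0_oo_ext; [|exact (is_RInt_0_oo_minus _ _ _ _
    (is_RInt_0_oo_scal (/ g) _ _ (is_RInt_0_oo_RC_integrand_0 g Hg)) HA)].
  intros t Ht; cbv beta. rewrite defect_diag by lra. unfold RC_integrand. rewrite Rplus_0_r.
  assert (0 < sqrt t) by (apply sqrt_lt_R0, Ht).
  assert (0 < sqrt (t + z)) by (apply sqrt_lt_R0; lra). field. repeat split; lra.
Qed.

Lemma is_RInt_0_oo_defect_weight_bounds z p g A : 0 <= z -> 0 < p -> 0 < g ->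
  is_RInt_0_oo (fun t => (/ (t * sqrt t) - RC_integrand z p t) * defect g g t) A ->
  let b := sqrt (3 * p * (p + 2 * z)) / 2 in
  let d := (z + 2 * p) / 3 in
  b / g * (PI / (sqrt b * sqrt g * (sqrt b + sqrt g))) < A /\
  A < 3 / 2 * (d / g) * (PI / (sqrt d * sqrt g * (sqrt d + sqrt g))).
Proof.
  intros Hz Hp Hg HA b d.
  assert (Hb : 0 < b) by (apply Rdiv_lt_0_compat; [apply sqrt_lt_R0; nra|lra]).
  assert (Hd : 0 < d) by (unfold d; lra).
  pose proof (continuous_on_pos_defect_weight z p g Hz Hp Hg) as C.
  assert (CK : forall c, 0 < c -> continuous_on_pos (fun t => RC_integrand 0 c t / (t + g)))
    by (intros; apply continuous_on_pos_div_shift, continuous_on_pos_RC_integrand; lra).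
  split.
  - apply (is_RInt_0_oo_lt _ _ _ _ (continuous_on_pos_minus _ _ C (continuous_on_pos_scal _ _ (CK b Hb)))
      (fun t Ht => defect_weight_lower z p g t Hz Hp Hg Ht)
      (is_RInt_0_oo_scal _ _ _ (is_RInt_0_oo_RC_integrand_0_div b g Hb Hg)) HA).
  - apply (is_RInt_0_oo_lt _ _ _ _ (continuous_on_pos_minus _ _ (continuous_on_pos_scal _ _ (CK d Hd)) C)
      (fun t Ht => defect_weight_upper z p g t Hz Hp Hg Ht)
      HA (is_RInt_0_oo_scal _ _ _ (is_RInt_0_oo_RC_integrand_0_div d g Hd Hg))).
Qed.

Lemma bound_of_two_pole_integral_eq c g : 0 < c -> 0 < g ->
  g * g / PI * (c / g * (PI / (sqrt c * sqrt g * (sqrt c + sqrt g)))) = sqrt c / (1 + sqrt (c / g)).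
Proof.
  intros Hc Hg. rewrite sqrt_div_alt by lra.
  pose proof (sqrt_sqrt c (Rlt_le _ _ Hc)) as Ec. pose proof (sqrt_sqrt g (Rlt_le _ _ Hg)) as Eg.
  assert (0 < sqrt c) by (apply sqrt_lt_R0, Hc). assert (0 < sqrt g) by (apply sqrt_lt_R0, Hg).
  pose proof PI_RGT_0.
  set (sc := sqrt c) in *; set (sg := sqrt g) in *. clearbody sc sg. subst c g.
  field. repeat split; lra.
Qed.

Lemma RJ_RC_representation x y z p : 0 < x -> 0 < y -> 0 <= z -> 0 < p ->
  let a := (x + y) / 2 in
  let g := sqrt (x * y) in
  exists theta : R,
    1 <= theta <= a / g /\
    (theta = 1 <-> x = y) /\ (theta = a / g <-> x = y) /\
    (g <> p ->
       RJ x y z p = 3 / g * RC z p - 3 * theta / (g - p) * (RC z g - p / g * RC z p)) /\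
    (z = 0 ->
       RJ x y 0 p = 3 * PI / (2 * sqrt (x * y * p)) * (1 - theta * sqrt p / (sqrt g + sqrt p))).
Proof.
  intros Hx Hy Hz Hp a g.
  assert (Hg : 0 < g) by (apply sqrt_lt_R0; nra).
  pose proof (is_RInt_0_oo_int0inf _ (ex_RInt_0_oo_RC_integrand_div z p Hz Hp g Hg)) as HL.
  set (L := int0inf _) in HL.
  pose proof (is_RInt_0_oo_RC_integrand_defect_diag z p Hz Hp g L Hg HL) as HA.
  set (A := 2 * RC z p / g - L) in HA.
  destruct (is_RInt_0_oo_defect_sandwich x y (RC_integrand z p) Hx Hy
    (continuous_on_pos_RC_integrand z p Hz (Rlt_le _ _ Hp)) (fun t => RC_integrand_pos z p t Hz Hp) A HA)
    as (B & HB & HA0 & HAB & HABlt).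
  exists (B / A).
  destruct (ratio_between (x = y) A B (a / g) HA0 HAB
    ltac:(intros <-; apply mean_div_geometric_mean_diag, Hx) HABlt) as (Hth & Hth1 & Hthk).
  assert (EB : B = B / A * A) by (field; lra).
  set (th := B / A) in *; clearbody th.
  repeat split; try tauto.
  - intros Hgp. rewrite (RJ_eq_defect_integral x y z p B Hx Hy Hz Hp HB), EB. fold g.
    assert (EA : A = 2 * RC z p / g - 2 * (RC z p - RC z g) / (g - p)) by (unfold A;
      rewrite (is_RInt_0_oo_unique _ _ _ HL (is_RInt_0_oo_RC_integrand_div z p Hz Hp g Hg Hgp)); reflexivity).
    rewrite EA. field. split; [intro; apply Hgp; lra|lra].
  - intros Hz0. subst z. rewrite (RJ_eq_defect_integral x y 0 p B Hx Hy Hz Hp HB), EB. fold g.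
    assert (EA : A = 2 * RC 0 p / g - PI / (sqrt p * sqrt g * (sqrt p + sqrt g))) by (unfold A;
      rewrite (is_RInt_0_oo_unique _ _ _ HL (is_RInt_0_oo_RC_integrand_0_div p g Hp Hg)); reflexivity).
    rewrite EA, RC_0_eq, (sqrt_mult (x * y) p) by nra. fold g.
    assert (Hsp : 0 < sqrt p) by (apply sqrt_lt_R0, Hp).
    assert (Hsg : 0 < sqrt g) by (apply sqrt_lt_R0, Hg).
    pose proof (sqrt_sqrt g (Rlt_le _ _ Hg)) as Eg.
    set (sg := sqrt g) in *. clearbody sg. rewrite <- Eg. field. lra.
Qed.

Lemma RJ_RG_representation x y z p : 0 < x -> 0 < y -> 0 <= z -> 0 < p ->
  let a := (x + y) / 2 in
  let g := sqrt (x * y) in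
  let b := sqrt (3 * p * (p + 2 * z)) / 2 in
  let d := (z + 2 * p) / 3 in
  exists theta' : R,
    sqrt b / (1 + sqrt (b / g)) < theta' /\
    theta' < 3 * a / (2 * g) * (sqrt d / (1 + sqrt (d / g))) /\
    RJ x y z p = 3 / g * RC z p - 6 / (x * y) * RG x y 0 + 3 * PI * theta' / (2 * x * y).
Proof.
  intros Hx Hy Hz Hp a g b d.
  assert (Hg : 0 < g) by (apply sqrt_lt_R0; nra).
  assert (Eg : g * g = x * y) by (apply sqrt_sqrt; nra).
  pose proof (is_RInt_0_oo_int0inf _ (ex_RInt_0_oo_RC_integrand_div z p Hz Hp g Hg)) as HL.
  pose proof (is_RInt_0_oo_defect_weight_diag z p g _ Hz Hp Hg
    (is_RInt_0_oo_RC_integrand_defect_diag z p Hz Hp g _ Hg HL)) as HA2.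
  set (A2 := / g * _ - _) in HA2.
  assert (Hphi : forall t, 0 < t -> 0 < / (t * sqrt t) - RC_integrand z p t)
    by (intros t Ht; pose proof (RC_integrand_lt_inv_pow_3_2 z p t Hz Hp Ht); lra).
  destruct (is_RInt_0_oo_defect_sandwich x y _ Hx Hy (continuous_on_pos_minus _ _
    continuous_on_pos_inv_pow_3_2 (continuous_on_pos_RC_integrand z p Hz (Rlt_le _ _ Hp))) Hphi _ HA2)
    as (B2 & HB2 & _ & [HAB2 HAB2'] & _).
  destruct (is_RInt_0_oo_defect_weight_bounds z p g A2 Hz Hp Hg HA2) as [Hlow Hup]. fold b d in Hlow, Hup.
  exists (x * y / PI * B2).
  assert (Hb : 0 < b) by (apply Rdiv_lt_0_compat; [apply sqrt_lt_R0; nra|lra]).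
  assert (Hd : 0 < d) by (unfold d; lra).
  assert (Ha : 0 < a) by (unfold a; lra).
  assert (Hxy : 0 < x * y / PI) by (apply Rdiv_lt_0_compat; [nra|apply PI_RGT_0]).
  rewrite <- (bound_of_two_pole_integral_eq b g), <- (bound_of_two_pole_integral_eq d g), Eg by lra.
  repeat split.
  - apply Rlt_le_trans with (x * y / PI * A2); apply Rmult_lt_compat_l || apply Rmult_le_compat_l; lra.
  - apply Rle_lt_trans with (x * y / PI * (a / g * A2)); [apply Rmult_le_compat_l; [lra|exact HAB2']|].
    replace (3 * a / (2 * g) * (x * y / PI * (d / g * (PI / (sqrt d * sqrt g * (sqrt d + sqrt g))))))
      with (x * y / PI * (a / g * (3 / 2 * (d / g) * (PI / (sqrt d * sqrt g * (sqrt d + sqrt g))))))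
      by (field; pose proof PI_RGT_0; pose proof (sqrt_lt_R0 d Hd); pose proof (sqrt_lt_R0 g Hg);
          repeat split; nra).
    apply Rmult_lt_compat_l; [lra|]. apply Rmult_lt_compat_l; [apply Rdiv_lt_0_compat|]; lra.
  - rewrite (RJ_eq_RG_defect_integral x y z p B2 Hx Hy Hz Hp HB2). fold g.
    field. split; [apply PI_neq0|nra].
Qed.

Theorem mainTheorem13 (x y z p : R) :
  0 < x -> 0 < y -> 0 <= z -> 0 < p ->
  let a := (x + y) / 2 in
  let g := sqrt (x * y) in
  let b := sqrt (3 * p * (p + 2 * z)) / 2 in
  let d := (z + 2 * p) / 3 in
  (exists theta : R,
      1 <= theta <= a / g /\
      (theta = 1 <-> x = y) /\ (theta = a / g <-> x = y) /\
      (g <> p ->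
         RJ x y z p = 3 / g * RC z p
                      - 3 * theta / (g - p) * (RC z g - p / g * RC z p)) /\
      (z = 0 ->
         RJ x y 0 p = 3 * PI / (2 * sqrt (x * y * p))
                      * (1 - theta * sqrt p / (sqrt g + sqrt p)))) /\
  (exists theta' : R,
      sqrt b / (1 + sqrt (b / g)) < theta' /\
      theta' < 3 * a / (2 * g) * (sqrt d / (1 + sqrt (d / g))) /\
      RJ x y z p = 3 / g * RC z p - 6 / (x * y) * RG x y 0
                   + 3 * PI * theta' / (2 * x * y)).
Proof.
  intros Hx Hy Hz Hp a g b d. split.
  - exact (RJ_RC_representation x y z p Hx Hy Hz Hp).
  - exact (RJ_RG_representation x y z p Hx Hy Hz Hp).
Qed.
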